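(* Let $k$ be an algebraically closed field, $G$ a connected linear algebraic group over $k$, and $V$ an $n$-dimensional algebraic $G$-module with basis $e_1,\ldots,e_n$ and dual basis $z_1,\ldots,z_n$ of $V^*$; identify $V$ with $\mathbb A^n$ via $\sum\gamma_ie_i\mapsto(\gamma_1,\ldots,\gamma_n)$. Let $\rho_{p,q}$ ($1\le p,q\le n$) be the regular functions on $G$ with $g\cdot\bigl(\sum_q\gamma_qe_q\bigr)=\sum_p\bigl(\sum_q\rho_{p,q}(g)\gamma_q\bigr)e_p$. Fix $r,s\in\mathbb N$ and a dominant morphism $\iota\colon\mathbb A^{r,s}\to G$. Let $L$ be an affine linear subvariety of $V$ and $\tau\colon\mathbb A^l\to V$ a morphism whose image is dense in $L$. Let $x_1,\ldots,x_{r+s},y_1,\ldots,y_l$ be the standard coordinates on $\mathbb A^{r+s+l}\supset\mathbb A^{r,s}\times\mathbb A^l$, and set $$f_p:=\sum_{q=1}^n\iota^*(\rho_{p,q})\,\tau^*(z_q)\in k[x_1,\ldots,x_{r+s},x_1^{-1},\ldots,x_r^{-1},y_1,\ldots,y_l],\quad 1\le p\le n,$$ written as $f_p=g_p/h_p$ with $g_p\in k[x_1,\ldots,x_{r+s},y_1,\ldots,y_l]$ and $h_p\in k[x_1,\ldots,x_r]$. In the polynomial ring $k[t,x_1,\ldots,x_{r+s},y_1,\ldots,y_l,z_1,\ldots,z_n]$ ($t$ a new variable), let $\mathcal G$ be a Gröbner basis of the ideal generated by $h_1z_1-g_1,\ldots,h_nz_n-g_n,\,1-h_1\cdots h_nt$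 with respect to a monomial order in which every variable $t,x_i,y_j$ is bigger than every variable $z_p$ (an elimination order for $t,x_1,\ldots,x_{r+s},y_1,\ldots,y_l$, e.g. a lexicographic one). Let $q_1,\ldots,q_m$ be all elements of $\mathcal G$ lying in $k[z_1,\ldots,z_n]$. Then $$\overline{G\cdot L}=\{v\in\mathbb A^n\mid q_1(v)=\cdots=q_m(v)=0\},$$ where the bar denotes Zariski closure in $V=\mathbb A^n$.
   Context: $\mathbb N$ is the set of nonnegative integers; $\mathbb A^{r,s}:=\{(\varepsilon_1,\ldots,\varepsilon_{r+s})\in\mathbb A^{r+s}\mid\varepsilon_1\cdots\varepsilon_r\neq0\}$, identified with an open subset of $\mathbb A^{r+s}$; $\iota^*(\rho_{p,q})\in k[x_1,\ldots,x_{r+s},x_1^{-1},\ldots,x_r^{-1}]$ and $\tau^*(z_q)\in k[y_1,\ldots,y_l]$. $G\cdot L=\{g\cdot v\mid g\in G,\ v\in L\}$. *)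

From HB Require Import structures.
From mathcomp Require Import all_boot all_algebra.
From mathcomp Require Import mpoly.
Set Implicit Arguments.
Unset Strict Implicit.
Unset Printing Implicit Defensive.
Import GRing.Theory.
Local Open Scope ring_scope.

Definition zclosure (k : fieldType) (m : nat) (X : ('I_m -> k) -> Prop)
  (v : 'I_m -> k) : Prop :=
  forall P : {mpoly k[m]}, (forall w, X w -> P.@[w] = 0) -> P.@[v] = 0.

Definition cvcoord (k : fieldType) (n : nat) (v : 'cV[k]_n) : 'I_n -> k :=
  fun i => v i 0.
Definition mxcoord (k : fieldType) (N : nat) (A : 'M[k]_N) : 'I_(N * N) -> k :=
  fun i => mxvec A 0 i.

Definition GLzero (k : fieldType) (N : nat) (S : {mpoly k[N * N]} -> Prop)
  (A : 'M[k]_N) : Prop :=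
  forall P, S P -> P.@[mxcoord A] = 0.

Definition linear_algebraic_group (k : fieldType) (N : nat)
  (G : 'M[k]_N -> Prop) : Prop :=
  [/\ exists S : {mpoly k[N * N]} -> Prop,
        forall A, G A <-> (A \in unitmx /\ GLzero S A),
      G 1%:M,
      (forall A B, G A -> G B -> G (A *m B)) &
      (forall A, G A -> G (invmx A))].

Definition zconnected (k : fieldType) (N : nat) (G : 'M[k]_N -> Prop) : Prop :=
  forall S1 S2 : {mpoly k[N * N]} -> Prop,
    (forall A, G A -> GLzero S1 A \/ GLzero S2 A) ->
    (forall A, G A -> ~ (GLzero S1 A /\ GLzero S2 A)) ->
    (forall A, G A -> GLzero S1 A) \/ (forall A, G A -> GLzero S2 A).

Definition regular_on (k : fieldType) (N : nat) (G : 'M[k]_N -> Prop)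
  (f : 'M[k]_N -> k) : Prop :=
  exists (P : {mpoly k[N * N]}) (e : nat),
    forall A, G A -> f A = P.@[mxcoord A] / (\det A) ^+ e.

(* algebraic (rational) G-module structure on k^n = V, via the matrix
   coefficients rho_{p,q} w.r.t. the standard basis *)
Definition rational_rep (k : fieldType) (N n : nat) (G : 'M[k]_N -> Prop)
  (rho : 'M[k]_N -> 'M[k]_n) : Prop :=
  [/\ rho 1%:M = 1%:M,
      (forall A B, G A -> G B -> rho (A *m B) = rho A *m rho B) &
      (forall p q, regular_on G (fun A => rho A p q))].

Definition in_Ars (k : fieldType) (r s : nat) (x : 'I_(r + s) -> k) : Prop :=
  forall i : 'I_r, x (lshift s i) != 0.

Definition restr_r (k : fieldType) (r s : nat) (x : 'I_(r + s) -> k)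
  : 'I_r -> k := fun i => x (lshift s i).

Definition regular_Ars (k : fieldType) (r s : nat) (f : ('I_(r + s) -> k) -> k)
  : Prop :=
  exists (P : {mpoly k[r + s]}) (e : nat),
    forall x, in_Ars x -> f x = P.@[x] / (\prod_(i < r) x (lshift s i)) ^+ e.

Definition morphism_Ars_G (k : fieldType) (r s N : nat) (G : 'M[k]_N -> Prop)
  (iota : ('I_(r + s) -> k) -> 'M[k]_N) : Prop :=
  (forall x, in_Ars x -> G (iota x)) /\
  (forall i j, regular_Ars (fun x => iota x i j)).

Definition dominant_Ars_G (k : fieldType) (r s N : nat) (G : 'M[k]_N -> Prop)
  (iota : ('I_(r + s) -> k) -> 'M[k]_N) : Prop :=
  forall A, G A ->
    zclosure (fun w => exists x, in_Ars x /\ w = mxcoord (iota x)) (mxcoord A).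

Definition poly_map (k : fieldType) (l n : nat) (tau : ('I_l -> k) -> 'cV[k]_n)
  : Prop :=
  forall p : 'I_n, exists P : {mpoly k[l]}, forall y, tau y p 0 = P.@[y].

Definition affine_linear (k : fieldType) (n : nat) (L : 'cV[k]_n -> Prop) : Prop :=
  exists (d : nat) (v0 : 'cV[k]_n) (B : 'M[k]_(n, d)),
    forall v, L v <-> exists u : 'cV[k]_d, v = v0 + B *m u.

Definition dense_image_in (k : fieldType) (l n : nat)
  (tau : ('I_l -> k) -> 'cV[k]_n) (L : 'cV[k]_n -> Prop) : Prop :=
  (forall y, L (tau y)) /\
  (forall v, L v ->
     zclosure (fun w => exists y, w = cvcoord (tau y)) (cvcoord v)).

Definition orbit_set (k : fieldType) (N n : nat) (G : 'M[k]_N -> Prop)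
  (rho : 'M[k]_N -> 'M[k]_n) (L : 'cV[k]_n -> Prop) (v : 'cV[k]_n) : Prop :=
  exists A w, G A /\ L w /\ v = rho A *m w.

Definition concat_pt (k : fieldType) (a b : nat) (x : 'I_a -> k) (y : 'I_b -> k)
  : 'I_(a + b) -> k :=
  fun i => match split i with inl j => x j | inr j => y j end.

Definition monomial_order (M : nat) (le : rel 'X_{1..M}) : Prop :=
  [/\ reflexive le, antisymmetric le, transitive le & total le] /\
  (forall m, le (@mnm0 M) m) /\
  (forall a b c, le a b -> le (mnm_add a c) (mnm_add b c)).

Definition lead_mono (k : fieldType) (M : nat) (le : rel 'X_{1..M})
  (f : {mpoly k[M]}) (m : 'X_{1..M}) : Prop :=
  m \in msupp f /\ forall m', m' \in msupp f -> le m' m.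

Definition in_ideal (k : fieldType) (M : nat) (gens : seq {mpoly k[M]})
  (f : {mpoly k[M]}) : Prop :=
  exists c : 'I_(size gens) -> {mpoly k[M]},
    f = \sum_(i < size gens) c i * gens`_i.

Definition groebner_basis (k : fieldType) (M : nat) (le : rel 'X_{1..M})
  (gens Gb : seq {mpoly k[M]}) : Prop :=
  (forall q, q \in Gb -> in_ideal gens q) /\
  (forall f, in_ideal gens f -> f != 0 ->
     exists2 q, q \in Gb &
       exists mq mf, [/\ lead_mono le q mq, lead_mono le f mf & lem mq mf]).

(* variable indices: t = 0, x_i = 1 + i, y_j = 1 + (r+s) + j,
   z_p = 1 + (r+s+l) + p *)

Definition nvars (r s l n : nat) : nat := (r + s + l + n).+1.

Definition bvar (k : fieldType) (r s l n : nat) (i : nat)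
  : {mpoly k[nvars r s l n]} := 'X_(inord i).

Definition var_t (k : fieldType) (r s l n : nat) := @bvar k r s l n 0.
Definition var_z (k : fieldType) (r s l n : nat) (p : 'I_n) :=
  @bvar k r s l n (r + s + l + p).+1.

Definition emb_h (k : fieldType) (r s l n : nat) (h : {mpoly k[r]})
  : {mpoly k[nvars r s l n]} :=
  h \mPo [tuple @bvar k r s l n i.+1 | i < r].
Definition emb_g (k : fieldType) (r s l n : nat) (g : {mpoly k[r + s + l]})
  : {mpoly k[nvars r s l n]} :=
  g \mPo [tuple @bvar k r s l n i.+1 | i < r + s + l].

Definition elim_gens (k : fieldType) (r s l n : nat)
  (g : 'I_n -> {mpoly k[r + s + l]}) (h : 'I_n -> {mpoly k[r]})
  : seq {mpoly k[nvars r s l n]} :=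
  [seq emb_h s l n (h p) * var_z k r s l p - emb_g n (g p) | p <- enum 'I_n]
  ++ [:: 1 - (\prod_(p < n) emb_h s l n (h p)) * var_t k r s l n].

Definition elim_var (r s l n : nat) (i : 'I_(nvars r s l n)) : bool :=
  (i <= r + s + l)%N.

Definition elimination_order (r s l n : nat) (le : rel 'X_{1..nvars r s l n})
  : Prop :=
  forall m m' : 'X_{1..nvars r s l n},
    (exists i, elim_var i /\ (0 < m i)%N) ->
    (forall i, elim_var i -> m' i = 0%N) ->
    le m' m.

Definition only_z (k : fieldType) (r s l n : nat) (q : {mpoly k[nvars r s l n]})
  : Prop :=
  forall m, m \in msupp q -> forall i, elim_var i -> m i = 0%N.

(* evaluation of a polynomial of k[z_1..z_n] (seen in the big ring) at v;
   the eliminated variables are set to 0 (irrelevant for q in k[z]) *)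
Definition z_point (k : fieldType) (r s l n : nat) (v : 'cV[k]_n)
  : 'I_(nvars r s l n) -> k :=
  fun i => match insub (i - (r + s + l).+1)%N with
           | Some p => v p 0
           | None => 0
           end.

From HB Require Import structures.
From mathcomp Require Import all_boot all_algebra.
From mathcomp Require Import mpoly.
From Stdlib Require Import Classical ClassicalEpsilon.
From mathcomp Require Import zify ring fingroup perm.
Import GRing.Theory.

(* The ideal generated by the [h_p z_p - g_p] and [1 - h_1 ... h_n t] is the
   ideal of the graph of (x, y) |-> rho (iota x) (tau y), whose coordinates are
   the fractions g_p / h_p; eliminating t, x and y leaves the ideal of the
   closure of the image, which is the closure of G.L because iota is dominant
   and tau has dense image in L.
   A Groebner basis element q in k[z] vanishes on the graph, hence on the
   image, hence, by density and after clearing the denominators of the regular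
   maps involved, on G.L.  Conversely, modulo the ideal z_p is congruent to
   t g_p prod_(q != p) h_q, so a polynomial P vanishing on G.L is congruent to
   t^D times the numerator of P(g / h), which is zero; and an element of the
   ideal lying in k[z] reduces to zero modulo the basis elements lying in k[z]
   because the order eliminates t, x and y, so it vanishes wherever they do. *)

Set Implicit Arguments.
Unset Strict Implicit.
Unset Printing Implicit Defensive.

Lemma exists_argmin_above (a : nat -> nat) (p : nat) :
  exists j, p < j /\ forall j', p < j' -> a j <= a j'.
Proof.
suff argmin v j0 : a j0 <= v -> p < j0 ->
    exists j, p < j /\ forall j', p < j' -> a j <= a j'.
  exact: (argmin _ p.+1 (leqnn _) (ltnSn p)).
elim: v j0 => [|v IHv] j0 a_j0 p_j0.
  by exists j0; split=> // j' _; move: a_j0; rewrite leqn0 => /eqP ->.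
have [[j' [p_j' a_j']]|nolower] :=
  classic (exists j', p < j' /\ a j' < a j0).
  by apply: (IHv j') => //; rewrite -ltnS (leq_trans a_j' a_j0).
exists j0; split=> // j' p_j'; rewrite leqNgt; apply/negP => a_j'.
by apply: nolower; exists j'.
Qed.

Lemma nondecreasing_subseq (a : nat -> nat) :
  exists psi : nat -> nat,
    (forall i, psi i < psi i.+1) /\ (forall i, a (psi i) <= a (psi i.+1)).
Proof.
pose next p := proj1_sig (constructive_indefinite_description _
  (exists_argmin_above a p)).
have nextP p : p < next p /\ forall j, p < j -> a (next p) <= a j.
  by rewrite /next; case: constructive_indefinite_description.
exists (fun i => next (iter i next 0)); split=> i /=; first exact: (nextP _).1.
apply: (nextP _).2; apply: leq_trans (nextP _).1 _.
exact: ltnW (nextP _).1.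
Qed.

Lemma nondecreasing_subseq_family (K : nat) (f : nat -> nat -> nat) :
  exists phi : nat -> nat, (forall i, phi i < phi i.+1) /\
    forall c, c < K -> forall i, f c (phi i) <= f c (phi i.+1).
Proof.
elim: K => [|K [phi [phi_incr phi_mono]]]; first by exists id.
have [psi [psi_incr psi_mono]] := nondecreasing_subseq (fun i => f K (phi i)).
have phi_homo := homo_ltn ltn_trans phi_incr.
exists (phi \o psi); split=> [i|c]; first exact/phi_homo/psi_incr.
rewrite ltnS leq_eqVlt => /orP[/eqP -> //|c_lt_K] i.
by apply: (homo_leq leqnn leq_trans (phi_mono c c_lt_K)); apply/ltnW/psi_incr.
Qed.

Lemma dickson (M : nat) (f : nat -> 'X_{1..M}) :
  exists i j, i < j /\ (f i <= f j)%MM.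
Proof.
have [phi [phi_incr phi_mono]] := nondecreasing_subseq_family M
  (fun c i => if insub c is Some j then f i j else 0).
exists (phi 0), (phi 1); split=> //.
by apply/mnm_lepP => j; have := phi_mono j (ltn_ord j) 0; rewrite valK.
Qed.

Section MonomialOrder.
Variables (M : nat) (le : rel 'X_{1..M}).
Hypothesis le_monomial : monomial_order le.

Lemma lem_monomial_order (a b : 'X_{1..M}) : (a <= b)%MM -> le a b.
Proof.
move=> le_ab; have [_ [le0m le_add]] := le_monomial.
by rewrite -(submK le_ab) -{1}(add0m a); apply/le_add/le0m.
Qed.

Lemma monomial_order_wf : well_founded (fun a b => le a b && (a != b)).
Proof.
have [[le_refl le_anti le_trans _] _] := le_monomial.
set lt := fun a b => le a b && (a != b).
have descend x : ~ Acc lt x -> exists y, lt y x /\ ~ Acc lt y.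
  move=> nacc; apply: NNPP => nodesc; apply: nacc; constructor => y lt_yx.
  by apply: NNPP => nacc_y; apply: nodesc; exists y.
move=> a0; apply: NNPP => nacc0.
pose T := {x | ~ Acc lt x}.
have next (x : T) : {y : T | lt (sval y) (sval x)}.
  case: x => x nacc.
  have [y [lt_yx nacc_y]] := constructive_indefinite_description _ (descend x nacc).
  by exists (exist _ y nacc_y).
pose fix chain i : T := if i is i'.+1 then sval (next (chain i')) else exist _ a0 nacc0.
pose f i := sval (chain i).
have lt_f i : lt (f i.+1) (f i) by rewrite /f /=; case: (next (chain i)).
have le_f : {homo f : i j / (i <= j) >-> le j i}.
  apply: homo_leq => [x|y x z le_yx le_zy|i]; first exact: le_refl.
    exact: le_trans le_zy le_yx.
  by case/andP: (lt_f i).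
have [i [j [lt_ij /lem_monomial_order le_fij]]] := dickson f.
have eq_fij : f i = f j by apply: le_anti; rewrite le_fij le_f // ltnW.
case/andP: (lt_f i) => le_fi /eqP; apply; apply: le_anti.
by rewrite le_fi eq_fij le_f.
Qed.

End MonomialOrder.

Local Open Scope ring_scope.

Lemma sum_if_eq_seq (R : nmodType) (T : eqType) (r : seq T) (a : T) (F : T -> R) :
  uniq r -> \sum_(x <- r) (if x == a then F x else 0) = if a \in r then F a else 0.
Proof.
elim: r => [|x r IHr] /=; first by rewrite big_nil.
case/andP=> x_notin_r uniq_r; rewrite big_cons IHr // in_cons.
by case: (eqVneq x a) => [<-|_] /=; rewrite ?(negbTE x_notin_r) ?addr0 ?add0r.
Qed.

Section VanishingPolynomials.
Variable k : closedFieldType.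

Lemma muni_meval m (P : {mpoly k[m.+1]}) (v : 'I_m.+1 -> k) :
  P.@[v] = (map_poly (meval (fun i => v (widen_ord (leqnSn m) i))) (muni P)).[v ord_max].
Proof.
rewrite muniE mevalE raddf_sum horner_sum /=; apply: eq_bigr => mm _.
rewrite -!mul_polyC rmorphM /= map_polyC map_polyXn /= hornerCM hornerXn.
rewrite mevalZ mevalX big_ord_recr /= -mulrA; congr (_ * (_ * _)).
by apply: eq_bigr => i _; rewrite mnmE.
Qed.

Lemma muni_mcoeff m (P : {mpoly k[m.+1]}) (mm : 'X_{1..m.+1}) :
  P@_mm = ((muni P)`_(mm ord_max))@_[multinom mm (widen_ord (leqnSn m) i) | i < m].
Proof.
rewrite muniE coef_sum raddf_sum /=.
rewrite (eq_bigr (fun mm' => if mm' == mm then P@_mm' else 0)).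
  rewrite sum_if_eq_seq ?msupp_uniq //; case: ifP => //.
  by rewrite mcoeff_msupp => /negbFE/eqP.
move=> mm' _; rewrite coefZ coefXn.
case: (eqVneq mm' mm) => [->|neq_mm].
  by rewrite !eqxx mulr1 mcoeffZ mcoeffX eqxx mulr1.
case: (eqVneq (mm ord_max) (mm' ord_max)) => [eq_last|]; last by rewrite mulr0 mcoeff0.
rewrite mulr1 mcoeffZ mcoeffX; case: eqP => [eq_init|]; last by rewrite mulr0.
case/eqP: neq_mm; apply/mnmP => i; case: (unliftP ord_max i) => [j ->|-> //].
have := congr1 (fun t : 'X_{1..m} => t j) eq_init; rewrite !mnmE.
suff -> : lift ord_max j = widen_ord (leqnSn m) j by [].
by apply: val_inj; rewrite /= /bump leqNgt ltn_ord.
Qed.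

Lemma mpoly_vanishing_eq0 m (P : {mpoly k[m]}) : (forall x, P.@[x] = 0) -> P = 0.
Proof.
elim: m P => [|m IHm] P P0.
  have eq0 (x : 'X_{1..0}) : x = 0%MM by apply/mnmP => -[].
  apply/mpolyP => mm; rewrite mcoeff0 (eq0 mm).
  move: (P0 (fun _ => 0)); rewrite mevalE.
  rewrite (eq_bigr (fun mm' => P@_mm')) => [|mm' _]; last by rewrite big_ord0 mulr1.
  have := msupp_uniq P; case E: (msupp P) => [|x [|y s]] /= uniq_supp.
  - by move=> _; apply: memN_msupp_eq0; rewrite E.
  - by rewrite big_seq1 (eq0 x).
  - by rewrite (eq0 x) (eq0 y) in_cons eqxx in uniq_supp.
have fibre0 w : map_poly (meval w) (muni P) = 0.
  apply: contraTeq isT => /closed_nonrootP [a]; rewrite /root => nonroot_a.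
  pose v : 'I_m.+1 -> k := fun i => if unlift ord_max i is Some j then w j else a.
  have := P0 v; rewrite muni_meval.
  have -> : map_poly (meval (fun i => v (widen_ord (leqnSn m) i))) (muni P)
         = map_poly (meval w) (muni P).
    apply: eq_map_poly => c; apply: meval_eq => i; rewrite /v.
    suff -> : widen_ord (leqnSn m) i = lift ord_max i by rewrite liftK.
    by apply: val_inj; rewrite /= /bump leqNgt ltn_ord.
  by rewrite /v unlift_none => P0_va; rewrite -P0_va eqxx in nonroot_a.
have coef0 j : (muni P)`_j = 0.
  apply: IHm => w; have := congr1 (fun p : {poly k} => p`_j) (fibre0 w).
  by rewrite coef_map /= coef0.
by apply/mpolyP => mm; rewrite mcoeff0 muni_mcoeff coef0 mcoeff0.
Qed.

Lemma mpoly_vanishing_off_eq0 m (P D : {mpoly k[m]}) : D != 0 ->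
  (forall x, D.@[x] != 0 -> P.@[x] = 0) -> P = 0.
Proof.
move=> D_neq0 P0; have : P * D = 0.
  apply: mpoly_vanishing_eq0 => x; rewrite mevalM.
  by case: (eqVneq D.@[x] 0) => [->|/P0 ->]; rewrite ?mulr0 ?mul0r.
by move/eqP; rewrite mulf_eq0 (negbTE D_neq0) orbF => /eqP.
Qed.

Lemma mpoly_neq0_nonvanishing m (P : {mpoly k[m]}) : P != 0 -> exists x, P.@[x] != 0.
Proof.
move=> P_neq0; apply: NNPP => vanishing; move/eqP: P_neq0; apply.
apply: mpoly_vanishing_eq0 => x; apply/eqP/contraT => Px_neq0.
by case: vanishing; exists x.
Qed.

Lemma comp_mpoly_vars_neq0 m M (P : {mpoly k[m]}) (f : 'I_m -> 'I_M) :
  injective f -> P != 0 -> P \mPo [tuple 'X_(f i) | i < m] != 0.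
Proof.
move=> f_inj /mpoly_neq0_nonvanishing [x Px_neq0].
pose y (j : 'I_M) := if [pick i | f i == j] is Some i then x i else 0.
apply: contraNneq Px_neq0 => /(congr1 (meval y)); rewrite meval0 comp_mpoly_meval.
move=> <-; apply/eqP/meval_eq => i; rewrite tnth_mktuple mevalXU /y.
by case: pickP => [i' /eqP/f_inj -> //|/(_ i)]; rewrite eqxx.
Qed.

End VanishingPolynomials.

Section ClearingDenominators.
Variable k : fieldType.

Definition numer_comp a b (Q : {mpoly k[a]}) (u : 'I_a -> {mpoly k[b]})
    (d : {mpoly k[b]}) : {mpoly k[b]} :=
  \sum_(mm <- msupp Q) Q@_mm *: ((\prod_i u i ^+ mm i) * d ^+ (msize Q - mdeg mm)).

Lemma numer_comp_meval a b (Q : {mpoly k[a]}) (u : 'I_a -> {mpoly k[b]}) d x :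
  d.@[x] != 0 ->
  (numer_comp Q u d).@[x] = d.@[x] ^+ msize Q * Q.@[fun i => (u i).@[x] / d.@[x]].
Proof.
move=> dx_neq0; rewrite /numer_comp raddf_sum [X in _ = _ * X]mevalE mulr_sumr.
(* generalized, lest [ring] try to normalize the exponent [msize Q] *)
apply: eq_big_seq => mm /msize_mdeg_lt/ltnW; move: (msize Q) => D le_mm_D.
rewrite /= mevalZ mevalM rmorph_prod /= rmorphXn /=.
rewrite (eq_bigr (fun i => (u i).@[x] ^+ mm i)) => [|i _]; last by rewrite rmorphXn.
have -> : \prod_i ((u i).@[x] / d.@[x]) ^+ mm i
        = (\prod_i (u i).@[x] ^+ mm i) / d.@[x] ^+ mdeg mm.
  rewrite (eq_bigr (fun i => (u i).@[x] ^+ mm i * (d.@[x]^-1) ^+ mm i)) => [|i _].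
    by rewrite big_split /= prodrXr -mdegE exprVn.
  by rewrite exprMn.
by rewrite expfB_cond ?(negbTE dx_neq0) ?add0n //; ring.
Qed.

Lemma regular_comp_mpoly (X : Type) a b (C : X -> Prop) (phi : X -> 'I_b -> k)
    (d : {mpoly k[b]}) (f : X -> 'I_a -> k) :
  (forall x, C x -> d.@[phi x] != 0) ->
  (forall i, exists (U : {mpoly k[b]}) (e : nat),
     forall x, C x -> f x i = U.@[phi x] / d.@[phi x] ^+ e) ->
  forall Q : {mpoly k[a]}, exists (R : {mpoly k[b]}) (e : nat),
    forall x, C x -> R.@[phi x] = d.@[phi x] ^+ e * Q.@[f x].
Proof.
move=> d_neq0 f_regular Q.
have [U U_regular] := fin_all_exists f_regular.
have [e f_fracE] := fin_all_exists U_regular.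
pose E := (\max_i e i)%N.
have f_commonE i x : C x ->
    f x i = (U i * d ^+ (E - e i)).@[phi x] / (d ^+ E).@[phi x].
  move=> Cx; rewrite f_fracE // mevalM !rmorphXn /=.
  rewrite -{2}(subnK (leq_bigmax i : (e i <= E)%N)) exprD invfM mulrA.
  by rewrite mulfK // expf_neq0 // d_neq0.
exists (numer_comp Q (fun i => U i * d ^+ (E - e i)) (d ^+ E)), (E * msize Q)%N.
move=> x Cx; rewrite numer_comp_meval; last by rewrite rmorphXn expf_neq0 // d_neq0.
rewrite rmorphXn /= -exprM; congr (_ * _); apply: meval_eq => i.
by rewrite f_commonE // rmorphXn.
Qed.

End ClearingDenominators.

Section IdealMembership.
Variables (k : fieldType) (M : nat) (gens : seq {mpoly k[M]}).
Local Notation I := (in_ideal gens).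

Lemma in_ideal0 : I 0.
Proof. by exists (fun _ => 0); rewrite big1 // => i _; rewrite mul0r. Qed.

Lemma in_idealD f g : I f -> I g -> I (f + g).
Proof.
move=> [cf ->] [cg ->]; exists (fun i => cf i + cg i).
by rewrite -big_split /=; apply: eq_bigr => i _; rewrite mulrDl.
Qed.

Lemma in_idealMl a f : I f -> I (a * f).
Proof.
move=> [c ->]; exists (fun i => a * c i).
by rewrite mulr_sumr; apply: eq_bigr => i _; rewrite mulrA.
Qed.

Lemma in_idealB f g : I f -> I g -> I (f - g).
Proof. by move=> If Ig; apply: in_idealD => //; rewrite -mulN1r; apply: in_idealMl. Qed.

Lemma in_ideal_gen f : f \in gens -> I f.
Proof.
move=> f_gen; have idx_f : (index f gens < size gens)%N by rewrite index_mem.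
exists (fun i => if i == Ordinal idx_f then 1 else 0).
rewrite (bigD1 (Ordinal idx_f)) //= eqxx mul1r big1 ?addr0 ?nth_index //.
by move=> i /negbTE ->; rewrite mul0r.
Qed.

Lemma in_ideal_meval f (x : 'I_M -> k) :
  (forall g, g \in gens -> g.@[x] = 0) -> I f -> f.@[x] = 0.
Proof.
move=> gens0 [c ->]; rewrite raddf_sum big1 // => i _ /=.
by rewrite mevalM (gens0 gens`_i) ?mulr0 //; apply: mem_nth.
Qed.

Lemma in_ideal_subrX x e : I (1 - x) -> I (1 - x ^+ e).
Proof.
move=> I1x; elim: e => [|e IHe]; first by rewrite expr0 subrr; apply: in_ideal0.
have -> : 1 - x ^+ e.+1 = (1 - x ^+ e) + x ^+ e * (1 - x) by rewrite exprSr; ring.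
by apply: in_idealD => //; apply: in_idealMl.
Qed.

Definition eqmod_ideal f g := I (f - g).

Lemma eqmod_refl f : eqmod_ideal f f.
Proof. by rewrite /eqmod_ideal subrr; apply: in_ideal0. Qed.

Lemma eqmod_trans f g h :
  eqmod_ideal f g -> eqmod_ideal g h -> eqmod_ideal f h.
Proof. by move=> Ifg Igh; have := in_idealD Ifg Igh; rewrite addrA subrK. Qed.

Lemma eqmodD f1 g1 f2 g2 :
  eqmod_ideal f1 g1 -> eqmod_ideal f2 g2 -> eqmod_ideal (f1 + f2) (g1 + g2).
Proof. by move=> I1 I2; rewrite /eqmod_ideal opprD addrACA; apply: in_idealD. Qed.

Lemma eqmodM f1 g1 f2 g2 :
  eqmod_ideal f1 g1 -> eqmod_ideal f2 g2 -> eqmod_ideal (f1 * f2) (g1 * g2).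
Proof.
move=> I1 I2; rewrite /eqmod_ideal.
have -> : f1 * f2 - g1 * g2 = f1 * (f2 - g2) + g2 * (f1 - g1) by ring.
by apply: in_idealD; apply: in_idealMl.
Qed.

Lemma eqmodX f g e : eqmod_ideal f g -> eqmod_ideal (f ^+ e) (g ^+ e).
Proof.
move=> Ifg; elim: e => [|e IHe]; first exact: eqmod_refl.
by rewrite !exprS; apply: eqmodM.
Qed.

Lemma eqmodZ c f g : eqmod_ideal f g -> eqmod_ideal (c *: f) (c *: g).
Proof. by rewrite /eqmod_ideal -scalerBr -mul_mpolyC; apply: in_idealMl. Qed.

Lemma eqmod_sum (T : eqType) (r : seq T) (F G : T -> {mpoly k[M]}) :
  {in r, forall i, eqmod_ideal (F i) (G i)} ->
  eqmod_ideal (\sum_(i <- r) F i) (\sum_(i <- r) G i).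
Proof.
by move=> FG; rewrite !big_seq; apply: big_ind2 => //; [exact: eqmod_refl|exact: eqmodD].
Qed.

Lemma eqmod_prod (T : Type) (r : seq T) (F G : T -> {mpoly k[M]}) :
  (forall i, eqmod_ideal (F i) (G i)) ->
  eqmod_ideal (\prod_(i <- r) F i) (\prod_(i <- r) G i).
Proof. by move=> FG; apply: big_ind2 => //; [apply: eqmod_refl|apply: eqmodM]. Qed.

Lemma eqmod_comp m (P : {mpoly k[m]}) (u w : m.-tuple {mpoly k[M]}) :
  (forall i, eqmod_ideal (tnth u i) (tnth w i)) -> eqmod_ideal (P \mPo u) (P \mPo w).
Proof.
move=> uw; rewrite !comp_mpolyEX; apply: eqmod_sum => mm _; apply: eqmodZ.
by rewrite !comp_mpolyX; apply: eqmod_prod => i; apply: eqmodX.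
Qed.

Lemma comp_scaled_eqmod a (P : {mpoly k[a]}) (u : 'I_a -> {mpoly k[M]}) H t :
  I (1 - H * t) ->
  eqmod_ideal (P \mPo [tuple u i * t | i < a]) (t ^+ msize P * numer_comp P u H).
Proof.
move=> I1Ht; rewrite comp_mpolyEX /numer_comp mulr_sumr.
apply: eqmod_sum => mm /msize_mdeg_lt/ltnW; move: (msize P) => D le_mm_D.
rewrite comp_mpolyX -scalerAr; apply: eqmodZ.
rewrite (eq_bigr (fun i => u i ^+ mm i * t ^+ mm i)) => [|i _]; last first.
  by rewrite tnth_mktuple exprMn.
rewrite big_split /= prodrXr -mdegE -(subnKC le_mm_D) addKn.
move: (mdeg mm) (D - mdeg mm)%N (\prod_i u i ^+ mm i) => e e' U.
rewrite /eqmod_ideal (_ : U * t ^+ e - _ = U * t ^+ e * (1 - (H * t) ^+ e')).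
  by apply: in_idealMl; apply: in_ideal_subrX.
by rewrite exprD exprMn; ring.
Qed.

End IdealMembership.

Section FreeOfVariables.
Variables (k : fieldType) (M : nat) (S : pred 'I_M).

Definition free_of (f : {mpoly k[M]}) :=
  forall m : 'X_{1..M}, m \in msupp f -> forall i, S i -> m i = 0%N.

Lemma free_of1 : free_of 1.
Proof. by move=> m; rewrite msupp1 mem_seq1 => /eqP -> i _; rewrite mnmE. Qed.

Lemma free_ofD f g : free_of f -> free_of g -> free_of (f + g).
Proof. by move=> Ff Fg m /msuppD_le; rewrite mem_cat => /orP[/Ff|/Fg]. Qed.

Lemma free_ofN f : free_of f -> free_of (- f).
Proof. by move=> Ff m; rewrite (perm_mem (msuppN f)); apply: Ff. Qed.

Lemma free_ofZ c f : free_of f -> free_of (c *: f).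
Proof. by move=> Ff m /msuppZ_le; apply: Ff. Qed.

Lemma free_ofM f g : free_of f -> free_of g -> free_of (f * g).
Proof.
move=> Ff Fg m /msuppM_le /allpairsP [[mf mg] /= [mf_supp mg_supp ->]] i Si.
by rewrite mnmDE Ff ?Fg.
Qed.

Lemma free_ofXn f e : free_of f -> free_of (f ^+ e).
Proof.
move=> Ff; elim: e => [|e IHe]; first by rewrite expr0; apply: free_of1.
by rewrite exprS; apply: free_ofM.
Qed.

Lemma free_of_mpolyX (m : 'X_{1..M}) : (forall i, S i -> m i = 0%N) -> free_of 'X_[m].
Proof. by move=> m0 m'; rewrite msuppX mem_seq1 => /eqP ->. Qed.

Lemma free_of_sum (T : Type) (r : seq T) (F : T -> {mpoly k[M]}) :
  (forall i, free_of (F i)) -> free_of (\sum_(i <- r) F i).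
Proof.
move=> FF; apply: big_ind => //; last exact: free_ofD.
by move=> m; rewrite msupp0.
Qed.

Lemma free_of_prod (T : Type) (r : seq T) (F : T -> {mpoly k[M]}) :
  (forall i, free_of (F i)) -> free_of (\prod_(i <- r) F i).
Proof. by move=> FF; apply: big_ind => //; [exact: free_of1 | exact: free_ofM]. Qed.

Lemma free_of_meval f (x y : 'I_M -> k) :
  free_of f -> (forall i, ~~ S i -> x i = y i) -> f.@[x] = f.@[y].
Proof.
move=> Ff eq_xy; rewrite !mevalE; apply: eq_big_seq => m m_supp; congr (_ * _).
apply: eq_bigr => i _; case: (boolP (S i)) => [Si|/eq_xy -> //].
by rewrite Ff ?expr0.
Qed.

End FreeOfVariables.

Section Elimination.
Variables (k : fieldType) (M : nat) (le : rel 'X_{1..M}) (S : pred 'I_M).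
Variables (gens Gb : seq {mpoly k[M]}).
Hypothesis le_monomial : monomial_order le.
Hypothesis le_elim : forall m m' : 'X_{1..M},
  (exists i, S i /\ (0 < m i)%N) -> (forall i, S i -> m' i = 0%N) -> le m' m.
Hypothesis Gb_groebner : groebner_basis le gens Gb.

Lemma lead_mono_exists (f : {mpoly k[M]}) : f != 0 -> exists m, lead_mono le f m.
Proof.
have [[le_refl _ le_trans le_total] _] := le_monomial.
rewrite -msupp_eq0 /lead_mono; elim: (msupp f) => [|x s IHs] //= _.
case: (eqVneq s [::]) => [->|/IHs [m [m_s m_max]]].
  by exists x; split=> [|m']; rewrite mem_seq1 // => /eqP ->.
case: (boolP (le m x)) => [le_mx|le_xm].
  exists x; split; first exact: mem_head.
  by move=> m'; rewrite in_cons => /orP[/eqP -> //|/m_max/le_trans]; apply.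
exists m; split; first by rewrite in_cons m_s orbT.
have {}le_xm : le x m by case/orP: (le_total m x) => // le_mx; rewrite le_mx in le_xm.
by move=> m'; rewrite in_cons => /orP[/eqP -> //|/m_max].
Qed.

Lemma reduction_lead_lt (f q : {mpoly k[M]}) mf mq mf' :
  lead_mono le f mf -> lead_mono le q mq -> (mq <= mf)%MM ->
  lead_mono le (f - (f@_mf / q@_mq) *: ('X_[mf - mq] * q)) mf' ->
  le mf' mf && (mf' != mf).
Proof.
have [_ [_ le_add]] := le_monomial.
move=> lead_mf lead_mq le_mq_mf; set f' := f - _ => lead_mf'.
have dmq : (mf - mq + mq)%MM = mf by rewrite submK.
have le_f'_mf m : m \in msupp f' -> le m mf.
  move=> /msuppB_le; rewrite mem_cat => /orP[/lead_mf.2 //|].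
  move/msuppZ_le; rewrite mulrC (perm_mem (msuppMX _ _)) => /mapP [m' m'_supp ->].
  by rewrite -[X in le _ X]dmq addmC [(_ + mq)%MM]addmC le_add // lead_mq.2.
rewrite le_f'_mf ?lead_mf'.1 //=; apply/eqP => eq_mf'; move: lead_mf'.1.
rewrite eq_mf' mcoeff_msupp /f' mcoeffB mcoeffZ (mulrC 'X_[_]) -{3}dmq mcoeffMX.
by rewrite mulfVK ?subrr ?eqxx // -mcoeff_msupp lead_mq.1.
Qed.

(* [mq] divides [mf], so it is free of [S]; a monomial of [q] involving [S]
   would exceed [mq] in an elimination order. *)
Lemma groebner_free_divisor f mf :
  in_ideal gens f -> f != 0 -> free_of S f -> lead_mono le f mf ->
  exists2 q, q \in Gb & exists2 mq, lead_mono le q mq &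
    free_of S q /\ (mq <= mf)%MM.
Proof.
have [[_ le_anti _ _] _] := le_monomial.
move=> If f_neq0 Ff lead_mf.
have [q Gb_q [mq [mf' [lead_mq lead_mf' le_mq_mf']]]] := Gb_groebner.2 f If f_neq0.
have eq_mf : mf' = mf.
  by apply: le_anti; rewrite (lead_mf'.2 _ lead_mf.1) (lead_mf.2 _ lead_mf'.1).
subst mf'; exists q => //; exists mq => //; split=> // m' m'_supp i Si.
have mq0 j : S j -> mq j = 0%N.
  move=> Sj; have /mnm_lepP/(_ j) := le_mq_mf'.
  by rewrite (Ff _ lead_mf.1) // leqn0 => /eqP.
apply/eqP; rewrite -leqn0 leqNgt; apply/negP => m'_pos.
have eq_m' : m' = mq.
  by apply: le_anti; rewrite (lead_mq.2 _ m'_supp) le_elim //; exists i.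
by move: m'_pos; rewrite eq_m' mq0.
Qed.

Variable zv : 'I_M -> k.
Hypothesis Gb_free_vanish : forall q, q \in Gb -> free_of S q -> q.@[zv] = 0.

Lemma groebner_eliminant_meval f : in_ideal gens f -> free_of S f -> f.@[zv] = 0.
Proof.
have [f0|f_neq0] := eqVneq f 0; first by rewrite f0 meval0.
have [mf lead_mf] := lead_mono_exists f_neq0.
elim/(well_founded_ind (monomial_order_wf le_monomial)): mf f f_neq0 lead_mf.
move=> mf IHmf f f_neq0 lead_mf If Ff.
have [q Gb_q [mq lead_mq [Fq le_mq_mf]]] := groebner_free_divisor If f_neq0 Ff lead_mf.
pose f' := f - (f@_mf / q@_mq) *: ('X_[mf - mq] * q).
have If' : in_ideal gens f'.
  apply: in_idealB => //; rewrite -mul_mpolyC; do 2!apply: in_idealMl.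
  exact: Gb_groebner.1.
have Ff' : free_of S f'.
  apply: free_ofD => //; apply/free_ofN/free_ofZ/free_ofM => //.
  by apply: free_of_mpolyX => i Si; rewrite mnmBE (Ff _ lead_mf.1).
have -> : f.@[zv] = f'.@[zv].
  by rewrite /f' mevalB mevalZ mevalM (Gb_free_vanish Gb_q Fq) !mulr0 subr0.
have [->|f'_neq0] := eqVneq f' 0; first by rewrite meval0.
have [mf' lead_mf'] := lead_mono_exists f'_neq0.
exact: (IHmf mf' (reduction_lead_lt lead_mf lead_mq le_mq_mf lead_mf')).
Qed.

End Elimination.

Section EliminationRing.
Variables (k : fieldType) (r s l n : nat).
Local Notation NV := (nvars r s l n).

Definition xy_part (pt : 'I_NV -> k) : 'I_(r + s + l) -> k :=
  fun j => pt (inord j.+1).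

Definition x_part (c : 'I_(r + s + l) -> k) : 'I_(r + s) -> k :=
  fun i => c (lshift l i).

Definition graph_point (t0 : k) (c : 'I_(r + s + l) -> k) (z : 'I_n -> k)
    : 'I_NV -> k :=
  fun i => if (i : nat) is j.+1 then
     if insub j is Some jj then c jj
     else if insub (j - (r + s + l))%N is Some p then z p else 0
  else t0.

Lemma bvar_meval i (pt : 'I_NV -> k) : (@bvar k r s l n i).@[pt] = pt (inord i).
Proof. exact: mevalXU. Qed.

Lemma emb_g_meval (gg : {mpoly k[r + s + l]}) pt :
  (emb_g n gg).@[pt] = gg.@[xy_part pt].
Proof.
rewrite comp_mpoly_meval; apply: meval_eq => j.
by rewrite tnth_mktuple bvar_meval.
Qed.

Lemma emb_h_meval (hh : {mpoly k[r]}) pt :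
  (emb_h s l n hh).@[pt] = hh.@[restr_r (x_part (xy_part pt))].
Proof.
rewrite comp_mpoly_meval; apply: meval_eq => j.
by rewrite tnth_mktuple bvar_meval.
Qed.

Lemma graph_point_t t0 c z : graph_point t0 c z (inord 0) = t0.
Proof. by rewrite /graph_point inordK. Qed.

Lemma xy_part_graph_point t0 c z : xy_part (graph_point t0 c z) =1 c.
Proof.
move=> j; rewrite /xy_part /graph_point inordK ?valK //.
by rewrite /nvars; have := ltn_ord j; lia.
Qed.

Lemma graph_point_z t0 c z (p : 'I_n) :
  graph_point t0 c z (inord (r + s + l + p).+1) = z p.
Proof.
rewrite /graph_point inordK; last by rewrite /nvars; have := ltn_ord p; lia.
rewrite insubF; last by lia.
by rewrite (_ : (r + s + l + p - (r + s + l) = p)%N) ?valK //; lia.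
Qed.

Lemma graph_point_z_point t0 c (v : 'cV[k]_n) (i : 'I_NV) : ~~ elim_var i ->
  graph_point t0 c (cvcoord v) i = @z_point k r s l n v i.
Proof.
rewrite /elim_var /graph_point /z_point -ltnNge.
case: i => [[|j]] //= j_lt elim_lt; rewrite insubF; last by lia.
by rewrite (_ : (j.+1 - (r + s + l).+1 = j - (r + s + l))%N) //; lia.
Qed.

Lemma z_point_var_z (v : 'cV[k]_n) (p : 'I_n) :
  @z_point k r s l n v (inord (r + s + l + p).+1) = v p 0.
Proof.
rewrite /z_point inordK; last by rewrite /nvars; have := ltn_ord p; lia.
by rewrite (_ : ((r + s + l + p).+1 - (r + s + l).+1 = p)%N) ?valK //; lia.
Qed.

Lemma var_z_free_of_elim_var (p : 'I_n) :
  free_of (@elim_var r s l n) (var_z k r s l p).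
Proof.
apply: free_of_mpolyX => i; rewrite /elim_var mnm1E => elim_i.
apply/eqP; rewrite eqb0; apply/negP => /eqP eq_i; move: elim_i.
rewrite -eq_i inordK /=; first by lia.
by rewrite /nvars; have := ltn_ord p; lia.
Qed.

Lemma comp_var_z_free_of_elim_var (P : {mpoly k[n]}) :
  free_of (@elim_var r s l n) (P \mPo [tuple var_z k r s l p | p < n]).
Proof.
rewrite comp_mpolyEX; apply: free_of_sum => mm; apply: free_ofZ.
rewrite comp_mpolyX; apply: free_of_prod => p; apply: free_ofXn.
by rewrite tnth_mktuple; apply: var_z_free_of_elim_var.
Qed.

Lemma comp_var_z_meval (P : {mpoly k[n]}) (v : 'cV[k]_n) :
  (P \mPo [tuple var_z k r s l p | p < n]).@[@z_point k r s l n v] = P.@[cvcoord v].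
Proof.
rewrite comp_mpoly_meval; apply: meval_eq => p.
by rewrite tnth_mktuple bvar_meval z_point_var_z.
Qed.

Definition z_part (q : {mpoly k[NV]}) : {mpoly k[n]} :=
  q \mPo [tuple if insub (i - (r + s + l).+1)%N is Some p then 'X_p else 0 | i < NV].

Lemma z_part_meval q (v : 'cV[k]_n) :
  (z_part q).@[cvcoord v] = q.@[@z_point k r s l n v].
Proof.
rewrite comp_mpoly_meval; apply: meval_eq => i; rewrite tnth_mktuple /z_point.
by case: insubP => [p _ _|_]; rewrite ?mevalXU ?meval0.
Qed.

End EliminationRing.

Lemma concat_pt_lshift (k : fieldType) a b (x : 'I_a -> k) (y : 'I_b -> k) j :
  concat_pt x y (lshift b j) = x j.
Proof. by rewrite /concat_pt -/(unsplit (inl _)) unsplitK. Qed.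

Lemma concat_pt_split (k : fieldType) a b (c : 'I_(a + b) -> k) :
  concat_pt (fun i => c (lshift b i)) (fun j => c (rshift a j)) =1 c.
Proof. by move=> j; rewrite /concat_pt -{2}(splitK j); case: (split j). Qed.

Section EliminationIdeal.
Variables (k : closedFieldType) (r s l n : nat).
Variables (g : 'I_n -> {mpoly k[r + s + l]}) (h : 'I_n -> {mpoly k[r]}).
Local Notation NV := (nvars r s l n).
Local Notation gens := (elim_gens g h).
Local Notation hb p := (emb_h s l n (h p)).
Local Notation gb p := (emb_g n (g p)).
Local Notation zb p := (var_z k r s l p).
Local Notation tb := (var_t k r s l n).
Local Notation h_at p c := ((h p).@[restr_r (x_part c)]).

Lemma elim_gens_graph_point (c : 'I_(r + s + l) -> k) (v : 'cV[k]_n) :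
  (forall p, h_at p c != 0) -> (forall p, h_at p c * v p 0 = (g p).@[c]) ->
  forall f, f \in gens -> f.@[graph_point (\prod_p h_at p c)^-1 c (cvcoord v)] = 0.
Proof.
move=> h_neq0 h_v f; set pt := graph_point _ _ _.
have hb_pt p : (hb p).@[pt] = h_at p c.
  rewrite emb_h_meval; apply: meval_eq => j.
  by rewrite /restr_r /x_part /pt xy_part_graph_point.
rewrite mem_cat mem_seq1 => /orP[/mapP [p _ ->]|/eqP ->].
  rewrite mevalB mevalM hb_pt emb_g_meval bvar_meval /pt graph_point_z.
  by rewrite (meval_eq _ (xy_part_graph_point _ _ _)) -h_v subrr.
rewrite mevalB meval1 mevalM bvar_meval /pt graph_point_t rmorph_prod /=.
by rewrite (eq_bigr _ (fun p _ => hb_pt p)) divff ?subrr //; apply/prodf_neq0.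
Qed.

Lemma elim_ideal_free_meval (q : {mpoly k[NV]}) (c : 'I_(r + s + l) -> k)
    (v : 'cV[k]_n) :
  in_ideal gens q -> free_of (@elim_var r s l n) q ->
  (forall p, h_at p c != 0) -> (forall p, h_at p c * v p 0 = (g p).@[c]) ->
  q.@[@z_point k r s l n v] = 0.
Proof.
move=> Iq Fq h_neq0 h_v.
rewrite -(free_of_meval (x := graph_point (\prod_p h_at p c)^-1 c (cvcoord v)) Fq).
  exact: in_ideal_meval (elim_gens_graph_point h_neq0 h_v) Iq.
by move=> i /graph_point_z_point ->.
Qed.

Hypothesis h_neq0 : forall p, h p != 0.

Lemma emb_h_neq0 p : hb p != 0.
Proof.
apply: (@comp_mpoly_vars_neq0 k r NV (h p) (fun i => inord i.+1)) => // i j /eqP.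
rewrite -val_eqE /= !inordK => [/eqP [] /val_inj //| |]; rewrite /nvars.
- by have := ltn_ord j; lia.
- by have := ltn_ord i; lia.
Qed.

Lemma var_z_eqmod p :
  eqmod_ideal gens (zb p) (gb p * (\prod_(q | q != p) hb q) * tb).
Proof.
have gen_p : in_ideal gens (hb p * zb p - gb p).
  apply/in_ideal_gen; rewrite mem_cat; apply/orP; left.
  by apply/mapP; exists p; rewrite ?mem_enum.
have gen_t : in_ideal gens (1 - (\prod_q hb q) * tb).
  by apply/in_ideal_gen; rewrite mem_cat mem_seq1 eqxx orbT.
rewrite /eqmod_ideal (bigD1 p) //= in gen_t *.
set H' := \prod_(q | q != p) hb q in gen_t *.
have -> : zb p - gb p * H' * tb
        = zb p * (1 - hb p * H' * tb) + H' * tb * (hb p * zb p - gb p) by ring.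
by apply: in_idealD; apply: in_idealMl.
Qed.

Let u p := gb p * \prod_(q | q != p) hb q.
Let H := \prod_p hb p.

Lemma numer_comp_elim_eq0 (P : {mpoly k[n]}) :
  (forall c, in_Ars (x_part c) -> (forall p, h_at p c != 0) ->
     P.@[fun p => (g p).@[c] / h_at p c] = 0) ->
  numer_comp P u H = 0.
Proof.
move=> P0; pose Dx := \prod_(i < r) bvar k r s l n i.+1.
have Dx_neq0 : Dx != 0 by apply/prodf_neq0 => i _; rewrite -msupp_eq0 msuppX.
have H_neq0 : H != 0 by apply/prodf_neq0 => p _; apply: emb_h_neq0.
apply: (mpoly_vanishing_off_eq0 (mulf_neq0 H_neq0 Dx_neq0)) => pt.
rewrite mevalM mulf_eq0 negb_or => /andP [H_pt Dx_pt].
have hb_pt p : (hb p).@[pt] = h_at p (xy_part pt) by rewrite emb_h_meval.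
have hb_neq0 p : h_at p (xy_part pt) != 0.
  by move: H_pt; rewrite /H rmorph_prod /= => /prodf_neq0 /(_ p isT); rewrite hb_pt.
have Ars_pt : in_Ars (x_part (xy_part pt)).
  move=> i; move: Dx_pt; rewrite /Dx rmorph_prod /= => /prodf_neq0 /(_ i isT).
  by rewrite bvar_meval.
rewrite numer_comp_meval // (_ : P.@[_] = 0) ?mulr0 //.
rewrite -(P0 _ Ars_pt hb_neq0); apply: meval_eq => p.
rewrite /H (bigD1 p) //= /u !mevalM !rmorph_prod /= hb_pt emb_g_meval.
have H'_neq0 : \prod_(q | q != p) (hb q).@[pt] != 0.
  by apply/prodf_neq0 => q _; rewrite hb_pt.
by rewrite invfM mulrACA divff // mulr1.
Qed.

Lemma comp_var_z_in_elim_ideal (P : {mpoly k[n]}) :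
  (forall c, in_Ars (x_part c) -> (forall p, h_at p c != 0) ->
     P.@[fun p => (g p).@[c] / h_at p c] = 0) ->
  in_ideal gens (P \mPo [tuple zb p | p < n]).
Proof.
move=> P0; have gen_t : in_ideal gens (1 - H * tb).
  by apply/in_ideal_gen; rewrite mem_cat mem_seq1 eqxx orbT.
have eqmod_u : eqmod_ideal gens (P \mPo [tuple zb p | p < n])
                               (P \mPo [tuple u p * tb | p < n]).
  by apply: eqmod_comp => p; rewrite !tnth_mktuple; apply: var_z_eqmod.
have := eqmod_trans eqmod_u (comp_scaled_eqmod P u gen_t).
by rewrite numer_comp_elim_eq0 // mulr0 /eqmod_ideal subr0.
Qed.

End EliminationIdeal.

Section LinearSubstitution.
Variable k : fieldType.

Definition det_mpoly N : {mpoly k[N * N]} :=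
  \sum_(sg : 'S_N) (-1) ^+ sg *: \prod_(i < N) 'X_(mxvec_index i (sg i)).

Lemma det_mpoly_meval N (A : 'M[k]_N) : (det_mpoly N).@[mxcoord A] = \det A.
Proof.
rewrite raddf_sum /=; apply: eq_bigr => sg _.
rewrite mevalZ rmorph_prod /=; congr (_ * _); apply: eq_bigr => i _.
by rewrite mevalXU /mxcoord mxvecE.
Qed.

Lemma mpoly_comp_mulmx n (A : 'M[k]_n) (P : {mpoly k[n]}) :
  exists T : {mpoly k[n]}, forall u, T.@[cvcoord u] = P.@[cvcoord (A *m u)].
Proof.
exists (P \mPo [tuple \sum_(q < n) A p q *: 'X_q | p < n]) => u.
rewrite comp_mpoly_meval; apply: meval_eq => p.
rewrite tnth_mktuple raddf_sum /cvcoord mxE; apply: eq_bigr => q _.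
by rewrite /= mevalZ mevalXU.
Qed.

Lemma mpoly_comp_mulmxr n (w : 'cV[k]_n) (P : {mpoly k[n]}) :
  exists T : {mpoly k[n * n]}, forall A, T.@[mxcoord A] = P.@[cvcoord (A *m w)].
Proof.
exists (P \mPo [tuple \sum_(q < n) w q 0 *: 'X_(mxvec_index p q) | p < n]) => A.
rewrite comp_mpoly_meval; apply: meval_eq => p.
rewrite tnth_mktuple raddf_sum /cvcoord mxE; apply: eq_bigr => q _.
by rewrite /= mevalZ mevalXU /mxcoord mxvecE mulrC.
Qed.

End LinearSubstitution.

Section DenseOrbitMap.
Variables (k : closedFieldType) (N n r s : nat).
Variables (G : 'M[k]_N -> Prop) (rho : 'M[k]_N -> 'M[k]_n).
Variable iota : ('I_(r + s) -> k) -> 'M[k]_N.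
Hypothesis G_group : linear_algebraic_group G.
Hypothesis rho_rep : rational_rep G rho.
Hypothesis iota_morphism : morphism_Ars_G G iota.
Hypothesis iota_dominant : dominant_Ars_G G iota.

Lemma group_det_neq0 A : G A -> \det A != 0.
Proof. by case: G_group => [[S GS] _ _ _] /GS []; rewrite unitmxE unitfE. Qed.

Lemma rep_orbit_mpoly (P : {mpoly k[n]}) (w : 'cV[k]_n) :
  exists (R : {mpoly k[N * N]}) (e : nat),
    forall A, G A -> R.@[mxcoord A] = \det A ^+ e * P.@[cvcoord (rho A *m w)].
Proof.
have [T T_E] := mpoly_comp_mulmxr w P.
have det_neq0 A : G A -> (det_mpoly k N).@[mxcoord A] != 0.
  by move=> GA; rewrite det_mpoly_meval group_det_neq0.
have rho_regular i : exists (U : {mpoly k[N * N]}) (e : nat), forall A, G A ->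
    mxcoord (rho A) i = U.@[mxcoord A] / (det_mpoly k N).@[mxcoord A] ^+ e.
  case/mxvec_indexP: i => p q; have [_ _ /(_ p q) [U [e U_E]]] := rho_rep.
  by exists U, e => A GA; rewrite /mxcoord mxvecE U_E // det_mpoly_meval.
have [R [e R_E]] := regular_comp_mpoly det_neq0 rho_regular T.
by exists R, e => A GA; rewrite R_E // det_mpoly_meval T_E.
Qed.

Let x_monomial : {mpoly k[r + s]} := \prod_(i < r) 'X_(lshift s i).

Lemma x_monomial_meval x : x_monomial.@[x] = \prod_(i < r) x (lshift s i).
Proof. by rewrite rmorph_prod; apply: eq_bigr => i _; rewrite /= mevalXU. Qed.

Lemma morphism_pullback_mpoly (R : {mpoly k[N * N]}) :
  exists (S : {mpoly k[r + s]}) (e : nat),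
    forall x, in_Ars x -> S.@[x] = x_monomial.@[x] ^+ e * R.@[mxcoord (iota x)].
Proof.
apply: (@regular_comp_mpoly k _ _ _ (@in_Ars k r s) id).
  by move=> x Ars_x; rewrite x_monomial_meval; apply/prodf_neq0 => i _.
move=> ix; case/mxvec_indexP: ix => i j; have [_ /(_ i j) [U [e U_E]]] := iota_morphism.
by exists U, e => x Ars_x; rewrite /mxcoord mxvecE U_E // x_monomial_meval.
Qed.

Lemma orbit_vanishing_from_dense (P : {mpoly k[n]}) (w : 'cV[k]_n)
    (D : {mpoly k[r + s]}) :
  D != 0 ->
  (forall x, in_Ars x -> D.@[x] != 0 -> P.@[cvcoord (rho (iota x) *m w)] = 0) ->
  forall A, G A -> P.@[cvcoord (rho A *m w)] = 0.
Proof.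
move=> D_neq0 P0 A GA.
have [R [e R_E]] := rep_orbit_mpoly P w.
have [S [e' S_E]] := morphism_pullback_mpoly R.
have [iota_G _] := iota_morphism.
have x_monomial_neq0 : x_monomial != 0.
  by apply/prodf_neq0 => i _; rewrite -msupp_eq0 msuppX.
have S0 : S = 0.
  apply: (mpoly_vanishing_off_eq0 (mulf_neq0 x_monomial_neq0 D_neq0)) => x.
  rewrite mevalM mulf_eq0 negb_or => /andP [xm_neq0 Dx_neq0].
  have Ars_x : in_Ars x.
    by move=> i; move: xm_neq0; rewrite x_monomial_meval => /prodf_neq0 /(_ i isT).
  rewrite S_E // R_E; last exact: iota_G.
  (* [P0] and the goal reach [k] through different structure paths, which
     defeats [rewrite] but not conversion *)
  transitivity (x_monomial.@[x] ^+ e' * (\det (iota x) ^+ e * 0)).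
    by congr (_ * (_ * _)); apply: P0.
  by rewrite !mulr0.
have R0 : R.@[mxcoord A] = 0.
  apply: iota_dominant => // _ [y [Ars_y ->]].
  have := S_E y Ars_y; rewrite S0 meval0 => /esym /eqP.
  rewrite mulf_eq0 expf_eq0 x_monomial_meval => /orP [/andP [_ /prodf_neq0]|/eqP //].
  by case=> i _; apply: Ars_y.
move: R0; rewrite R_E // => /eqP; rewrite mulf_eq0 expf_eq0 (negbTE (group_det_neq0 GA)).
by rewrite andbF => /eqP.
Qed.

End DenseOrbitMap.

Section OrbitClosure.
Variables (k : closedFieldType) (N n r s l : nat).
Variables (G : 'M[k]_N -> Prop) (rho : 'M[k]_N -> 'M[k]_n).
Variables (iota : ('I_(r + s) -> k) -> 'M[k]_N) (L : 'cV[k]_n -> Prop).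
Variable tau : ('I_l -> k) -> 'cV[k]_n.
Variables (g : 'I_n -> {mpoly k[r + s + l]}) (h : 'I_n -> {mpoly k[r]}).
Variables (le : rel 'X_{1..nvars r s l n}) (Gb : seq {mpoly k[nvars r s l n]}).
Hypothesis iota_morphism : morphism_Ars_G G iota.
Hypothesis tau_dense : dense_image_in tau L.
Hypothesis h_neq0 : forall p, h p != 0.
Hypothesis gh_orbit : forall p (x : 'I_(r + s) -> k) (y : 'I_l -> k), in_Ars x ->
  (h p).@[restr_r x] * (rho (iota x) *m tau y) p 0 = (g p).@[concat_pt x y].
Hypothesis Gb_groebner : groebner_basis le (elim_gens g h) Gb.
Local Notation orbit_closure v :=
  (zclosure (fun w => exists u, orbit_set G rho L u /\ w = cvcoord u) (cvcoord v)).

Lemma h_at_concat_pt p (x : 'I_(r + s) -> k) (y : 'I_l -> k) :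
  (h p).@[restr_r (x_part (concat_pt x y))] = (h p).@[restr_r x].
Proof. by apply: meval_eq => j; rewrite /restr_r /x_part concat_pt_lshift. Qed.

Lemma orbit_closure_eliminant_zeros (v : 'cV[k]_n) :
  linear_algebraic_group G -> rational_rep G rho -> dominant_Ars_G G iota ->
  orbit_closure v -> forall q, q \in Gb -> only_z q -> q.@[@z_point k r s l n v] = 0.
Proof.
move=> G_group rho_rep iota_dominant v_closure q Gb_q Fq.
pose D := \prod_p (h p \mPo [tuple 'X_(lshift s i) | i < r]).
have D_neq0 : D != 0.
  apply/prodf_neq0 => p _; apply: comp_mpoly_vars_neq0 => //; exact: lshift_inj.
have Dx_h x : D.@[x] != 0 -> forall p, (h p).@[restr_r x] != 0.
  rewrite rmorph_prod /= => /prodf_neq0 Dx_neq0 p; have := Dx_neq0 p isT.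
  rewrite comp_mpoly_meval (@meval_eq _ _ _ (restr_r x)) // => i.
  by rewrite tnth_mktuple mevalXU.
rewrite -z_part_meval; apply: v_closure => _ [_ [[A [w [GA [Lw ->]]]] ->]].
have [T T_E] := mpoly_comp_mulmx (rho A) (z_part q).
rewrite -T_E; apply: (tau_dense.2 w Lw T) => _ [y ->]; rewrite T_E.
apply: (orbit_vanishing_from_dense G_group rho_rep iota_morphism iota_dominant
  D_neq0) => //.
move=> x Ars_x Dx_neq0; rewrite z_part_meval.
apply: (elim_ideal_free_meval (Gb_groebner.1 q Gb_q) Fq (c := concat_pt x y)).
  by move=> p; rewrite h_at_concat_pt Dx_h.
by move=> p; rewrite h_at_concat_pt gh_orbit.
Qed.

Lemma eliminant_zeros_orbit_closure (v : 'cV[k]_n) :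
  monomial_order le -> elimination_order le ->
  (forall q, q \in Gb -> only_z q -> q.@[@z_point k r s l n v] = 0) -> orbit_closure v.
Proof.
move=> le_monomial le_elim Gb0 P P0.
have [iota_G _] := iota_morphism.
have IP : in_ideal (elim_gens g h) (P \mPo [tuple var_z k r s l p | p < n]).
  apply: comp_var_z_in_elim_ideal => // c Ars_c h_c_neq0.
  pose y j := c (rshift (r + s) j).
  have eq_c : concat_pt (x_part c) y =1 c := concat_pt_split c.
  rewrite -(P0 (cvcoord (rho (iota (x_part c)) *m tau y))); last first.
    exists (rho (iota (x_part c)) *m tau y); split=> //.
    exists (iota (x_part c)), (tau y).
    by split; [exact: iota_G | split; [exact: tau_dense.1|]].
  apply: meval_eq => p; rewrite -(meval_eq _ eq_c) -gh_orbit //.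
  by rewrite mulrC mulKf.
rewrite -(comp_var_z_meval r s l).
apply: (groebner_eliminant_meval le_monomial le_elim Gb_groebner Gb0 IP).
exact: comp_var_z_free_of_elim_var.
Qed.

End OrbitClosure.


Theorem theorem4 (k : closedFieldType) (N n r s l : nat)
  (G : 'M[k]_N -> Prop) (rho : 'M[k]_N -> 'M[k]_n)
  (iota : ('I_(r + s) -> k) -> 'M[k]_N)
  (L : 'cV[k]_n -> Prop) (tau : ('I_l -> k) -> 'cV[k]_n)
  (g : 'I_n -> {mpoly k[r + s + l]}) (h : 'I_n -> {mpoly k[r]})
  (le : rel 'X_{1..nvars r s l n}) (Gb : seq {mpoly k[nvars r s l n]}) :
  linear_algebraic_group G ->
  zconnected G ->
  rational_rep G rho ->
  morphism_Ars_G G iota ->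
  dominant_Ars_G G iota ->
  affine_linear L ->
  poly_map tau ->
  dense_image_in tau L ->
  (* f_p = g_p / h_p, where f_p = sum_q iota^*(rho_{p,q}) tau^*(z_q) *)
  (forall p, h p != 0) ->
  (forall p (x : 'I_(r + s) -> k) (y : 'I_l -> k), in_Ars x ->
     (h p).@[restr_r x] * (rho (iota x) *m tau y) p 0
       = (g p).@[concat_pt x y]) ->
  monomial_order le ->
  elimination_order le ->
  groebner_basis le (elim_gens g h) Gb ->
  forall v : 'cV[k]_n,
    zclosure (fun w => exists u, orbit_set G rho L u /\ w = cvcoord u)
             (cvcoord v)
    <-> (forall q, q \in Gb -> only_z q -> q.@[@z_point k r s l n v] = 0).
Proof.
move=> G_group _ rho_rep iota_morphism iota_dominant _ _ tau_dense h_neq0 gh_orbit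
  le_monomial le_elim Gb_groebner v; split.
- exact: (orbit_closure_eliminant_zeros iota_morphism tau_dense h_neq0 gh_orbit
    Gb_groebner G_group rho_rep iota_dominant).
- exact: (eliminant_zeros_orbit_closure iota_morphism tau_dense h_neq0 gh_orbit
    Gb_groebner le_monomial le_elim).
Qed.
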